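(* Let $f\colon M\to G$ be an epimorphism in the category $\mathbf{TGr}$ of Hausdorff topological groups and continuous homomorphisms, and let $H$ be the closure of the subgroup $f(M)$ in $G$. If any one of the following conditions holds, then $f(M)$ is dense in $G$: (1) the right uniformity $\mathcal U_r$ on the coset space $G/H$ is non-archimedean; (2) $G$ is a non-archimedean topological group; (3) $H$ is open in $G$.
   Context: A morphism $f\colon M\to G$ in $\mathbf{TGr}$ is an epimorphism if there is no pair of distinct continuous homomorphisms $g,h\colon G\to P$ into a Hausdorff topological group $P$ with $g\circ f=h\circ f$. A topological group is non-archimedean if it has a local base at the identity consisting of open subgroups. For a closed subgroup $H$ of $G$, the right uniformity $\mathcal U_r$ on the left coset space $G/H$ is the uniformity with base the entourages $\tilde U=\{(aH,bH): bH\subseteq UaH\}$, $U$ ranging over the neighborhoods of the identity in $G$. A uniformity is non-archimedean if it has a base consisting of equivalence relations. *)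

From HB Require Import structures.
From mathcomp Require Import all_boot monoid.
From mathcomp Require Import all_classical topology.
Unset Printing Implicit Defensive.
Local Open Scope classical_set_scope.
Local Open Scope group_scope.

HB.mixin Record isTopologicalGroup G of Group G & Topological G := {
  mulg_continuous : continuous (fun p : G * G => p.1 * p.2);
  invg_continuous : continuous (fun x : G => x^-1)
}.

#[short(type="topGroupType")]
HB.structure Definition TopologicalGroup :=
  {G of isTopologicalGroup G & Group G & Topological G}.

Section Defs.
Context {G : topGroupType}.

Definition group_hom {P : topGroupType} (g : G -> P) : Prop :=
  forall x y, g (x * y) = g x * g y.

Definition is_subgroup (S : set G) : Prop :=
  S 1 /\ (forall x y, S x -> S y -> S (x * y)) /\ (forall x, S x -> S x^-1).

Definition nonarchimedean_group : Prop :=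
  forall U : set G, nbhs (1 : G) U ->
    exists V : set G, [/\ open V, is_subgroup V & V `<=` U].

Definition lcoset (H : set G) (a : G) : set G := [set a * h | h in H].
Definition coset_space (H : set G) := {A : set G | exists a, A = lcoset H a}.

Definition setmulg (U A : set G) : set G := [set u * x | u in U & x in A].

Definition right_entourage (H : set G) (U : set G) :
    set (coset_space H * coset_space H) :=
  [set p | sval p.2 `<=` setmulg U (sval p.1)].

Definition right_unif_entourage (H : set G)
    (E : set (coset_space H * coset_space H)) : Prop :=
  exists U : set G, nbhs (1 : G) U /\ right_entourage H U `<=` E.

Definition equivalence_rel {X : Type} (R : set (X * X)) : Prop :=
  [/\ (forall x, R (x, x)),
      (forall x y, R (x, y) -> R (y, x)) &
      (forall x y z, R (x, y) -> R (y, z) -> R (x, z))].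

Definition right_unif_nonarchimedean (H : set G) : Prop :=
  forall E, right_unif_entourage H E ->
    exists R, [/\ equivalence_rel R, right_unif_entourage H R & R `<=` E].

End Defs.

Definition TGr_epi (M G : topGroupType) (f : M -> G) : Prop :=
  forall (P : topGroupType) (g h : G -> P),
    hausdorff_space P ->
    continuous g -> group_hom g -> continuous h -> group_hom h ->
    (forall x, g (f x) = h (f x)) -> g = h.

From HB Require Import structures.
From mathcomp Require Import all_boot monoid.
From mathcomp Require Import all_classical topology.
From Stdlib Require List.

Set Implicit Arguments.
Unset Strict Implicit.
Unset Printing Implicit Defensive.

Local Open Scope classical_set_scope.
Local Open Scope group_scope.

(** Let H be the closure of f(M) and suppose some a lies outside H.  Each of
   the three conditions yields an open subgroup V of G with a outside V H.
   G acts on the left cosets G/V with open stabilisers, hence continuously on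
   G/V x bool, which gives a continuous homomorphism rho of G into the
   symmetric group of G/V x bool with the topology of pointwise convergence, a
   Hausdorff topological group.  Conjugating rho by the involution that flips
   the boolean exactly over the cosets meeting H gives a second continuous
   homomorphism.  Both agree on H, which permutes the cosets meeting H, but
   not at a^-1, since V meets H while a^-1 V does not; so f is not an
   epimorphism. *)

Lemma filter_forall_In (T I : Type) (F : set_system T) (P : I -> set T)
    (s : seq I) :
  Filter F -> (forall i, F (P i)) -> F [set t | forall i, List.In i s -> P i t].
Proof.
move=> FF FP; elim: s => [|i s IHs].
  by apply: filterS filterT => t _ i [].
by apply: filterS (filterI (FP i) IHs) => t [Pit Pst] j [<-|/Pst].
Qed.

Lemma closureT_dense (T : topologicalType) (S : set T) :
  closure S = setT -> dense S.
Proof.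
move=> clST O [x Ox] Oo; have : closure S x by rewrite clST.
by move=> /(_ O (open_nbhs_nbhs (conj Oo Ox))); rewrite setIC.
Qed.

Section TopologicalGroupTheory.
Variable G : topGroupType.
Implicit Types (a b x y : G) (S U V : set G).

Lemma continuousMg (X : topologicalType) (f g : X -> G) :
  continuous f -> continuous g -> continuous (fun z => f z * g z).
Proof.
move=> fc gc z; apply: continuous2_cvg; [|exact: fc|exact: gc].
exact: (mulg_continuous (f z, g z)).
Qed.

Lemma continuous_conjg (X : topologicalType) (g : X -> G) c :
  continuous g -> continuous (fun z => g z ^ c).
Proof.
move=> gc; apply: continuousMg (@cst_continuous _ _ c^-1) _.
exact: continuousMg gc (@cst_continuous _ _ c).
Qed.

Lemma group_hom_conjg (M : topGroupType) (g : M -> G) c :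
  group_hom g -> group_hom (fun z => g z ^ c).
Proof. by move=> gM x y; rewrite gM conjMg. Qed.

Lemma range_subgroup (M : topGroupType) (f : M -> G) :
  group_hom f -> is_subgroup (range f).
Proof.
move=> fM; have f1 : f 1 = 1 by apply: (@mulgI _ (f 1)); rewrite -fM !mulg1.
split; first by exists 1.
split; first by move=> _ _ [x _ <-] [y _ <-]; exists (x * y); rewrite ?fM.
move=> _ [x _ <-]; exists x^-1 => //.
by apply: (@mulgI _ (f x)); rewrite -fM !mulgV.
Qed.

Lemma closure_subgroup S : is_subgroup S -> is_subgroup (closure S).
Proof.
case=> S1 [SM SV]; split; first exact: subset_closure.
split=> [x y Sx Sy B|x Sx B].
  case/(mulg_continuous (x, y)) => -[Bx By] /= [/Sx[s [Ss Bs]] /Sy[t [St Bt]]].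
  by move=> sB; exists (s * t); split; [exact: SM|exact: (sB (s, t))].
by case/(invg_continuous x)/Sx => s [Ss Bs]; exists s^-1; split; [exact: SV|].
Qed.

Lemma subgroup_nbhs1_open S : is_subgroup S -> nbhs 1 S -> open S.
Proof.
case=> _ [SM _] S1; rewrite openE => v Sv.
have : nbhs v [set x | S (v^-1 * x)].
  apply: (continuousMg (@cst_continuous _ _ v^-1) (fun=> cvg_id)).
  by rewrite mulVg.
by apply: filterS => x /(SM _ _ Sv); rewrite mulVKg.
Qed.

Lemma closed_nbhs1_setmulg_notin S a :
  closed S -> ~ S a -> exists2 U, nbhs 1 U & ~ setmulg U S a.
Proof.
move=> Sc Sa; exists [set u | ~ S (u^-1 * a)]; last first.
  by case=> u Su [s Ss usa]; apply: Su; rewrite -usa mulKg.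
apply: open_nbhs_nbhs; split; last by rewrite /= invg1 mul1g.
apply: (continuousP (fun u => u^-1 * a)).1 _ _ (closed_openC Sc).
exact: continuousMg invg_continuous (@cst_continuous _ _ a).
Qed.

Lemma image_lcoset S x a : [set x * z | z in lcoset S a] = lcoset S (x * a).
Proof.
apply/seteqP; split=> w.
  by case=> _ [s Ss <-] <-; exists s; rewrite ?mulgA.
by case=> s Ss <-; exists (a * s); [exists s|rewrite mulgA].
Qed.

Lemma eq_lcoset S a b :
  is_subgroup S -> S (b^-1 * a) -> lcoset S a = lcoset S b.
Proof.
case=> _ [SM SV] Sba; apply/seteqP; split=> _ [s Ss <-].
  by exists (b^-1 * a * s); [exact: SM|rewrite mulgA mulVKg].
exists ((b^-1 * a)^-1 * s); first by apply: SM => //; exact: SV.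
by rewrite mulgA invgM invgK mulgA mulgV mul1g.
Qed.

Lemma coset_space_eq S (A B : coset_space S) : sval A = sval B -> A = B.
Proof. by case: A B => A pA [B pB] /= AB; exact: eq_exist. Qed.

Lemma meets_subgroup_image_mulg S A x : is_subgroup S -> S x ->
  [set x * z | z in A] `&` S !=set0 <-> A `&` S !=set0.
Proof.
case=> _ [SM SV] Sx; split=> [[_ [[z Az <-] Sxz]]|[z [Az Sz]]].
  by exists z; split; rewrite // -(mulKg x z); apply: SM; [exact: SV|].
by exists (x * z); split; [exists z|exact: SM].
Qed.

Lemma nonarchimedean_setmulg_open_subgroup S U :
  nonarchimedean_group (G:=G) -> nbhs 1 U ->
  exists V, [/\ open V, is_subgroup V & setmulg V S `<=` setmulg U S].
Proof.
move=> Gna /Gna[V [Vo Vsub VU]]; exists V; split=> // _ [v Vv [s Ss <-]].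
by exists v; [exact: VU|exists s].
Qed.

Lemma open_subgroup_setmulg S U :
  is_subgroup S -> open S -> nbhs 1 U ->
  exists V, [/\ open V, is_subgroup V & setmulg V S `<=` setmulg U S].
Proof.
case=> S1 [SM SV] So /nbhs_singleton U1; exists S; split=> //.
move=> _ [s Ss [t St <-]].
by exists 1 => //; exists (s * t); rewrite ?mul1g //; exact: SM.
Qed.

Definition lcoset_pt S y : coset_space S :=
  exist _ (lcoset S y) (ex_intro _ y erefl).

Definition rel_stabilizer S (R : set (coset_space S * coset_space S)) : set G :=
  [set x | forall y, R (lcoset_pt S y, lcoset_pt S (x * y))].

Lemma rel_stabilizer_subgroup S (R : set (coset_space S * coset_space S)) :
  equivalence_rel R -> is_subgroup (rel_stabilizer R).
Proof.
case=> Rr Rs Rt; split; first by move=> y; rewrite mul1g.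
split; first by move=> x z Rx Rz y; rewrite -mulgA; exact: Rt (Rz y) (Rx _).
by move=> x Rx y; apply: Rs; have := Rx (x^-1 * y); rewrite mulVKg.
Qed.

Lemma sub_rel_stabilizer S U (R : set (coset_space S * coset_space S)) :
  right_entourage S U `<=` R -> U `<=` rel_stabilizer R.
Proof.
move=> UR u Uu y; apply: UR => _ [s Ss <-].
by exists u => //; exists (y * s); [exists s|rewrite mulgA].
Qed.

Lemma setmulg_rel_stabilizer S U (R : set (coset_space S * coset_space S)) :
  R `<=` right_entourage S U -> setmulg (rel_stabilizer R) S `<=` setmulg U S.
Proof.
move=> RU _ [v Rv [s Ss <-]].
have [|u Uu [_ [t St <-] <-]] := RU _ (Rv 1) (v * s).
  by exists s; rewrite ?mulg1.
by exists u => //; exists t; rewrite ?mul1g.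
Qed.

Lemma right_unif_nonarchimedean_setmulg_open_subgroup S U :
  right_unif_nonarchimedean S -> nbhs 1 U ->
  exists V, [/\ open V, is_subgroup V & setmulg V S `<=` setmulg U S].
Proof.
move=> Sna U1.
have [R [Req [W [W1 WR]] RU]] :=
  Sna _ (ex_intro _ U (conj U1 (@subset_refl _ _))).
have Rsub := rel_stabilizer_subgroup Req.
exists (rel_stabilizer R); split; [|by []|exact: setmulg_rel_stabilizer].
apply: subgroup_nbhs1_open Rsub _.
by apply: filterS W1; exact: sub_rel_stabilizer.
Qed.

End TopologicalGroupTheory.

Section SymmetricGroup.
Variable X : Type.

Record sym := Sym {
  sym_fun :> X -> X;
  sym_inv : X -> X;
  sym_funK : cancel sym_fun sym_inv;
  sym_invK : cancel sym_inv sym_fun }.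

Lemma symP (s t : sym) : s =1 t -> s = t.
Proof.
case: s t => f g fK gK [f' g' fK' gK'] /= /funext ff'; subst f'.
have gg' : g' = g by apply: funext => x; rewrite -{1}(gK x) fK'.
by subst g'; congr Sym; exact: Prop_irrelevance.
Qed.

HB.instance Definition _ := gen_eqMixin sym.
HB.instance Definition _ := gen_choiceMixin sym.

Definition sym1 : sym := @Sym id id (fun _ => erefl) (fun _ => erefl).
Definition symM (s t : sym) : sym :=
  Sym (can_comp (sym_funK s) (sym_funK t)) (can_comp (sym_invK t) (sym_invK s)).
Definition symV (s : sym) : sym := Sym (sym_invK s) (sym_funK s).

Lemma symMA : associative symM. Proof. by move=> r s t; apply: symP. Qed.
Lemma sym1M : left_id sym1 symM. Proof. by move=> s; apply: symP. Qed.
Lemma symM1 : right_id sym1 symM. Proof. by move=> s; apply: symP. Qed.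
Lemma symVM : left_inverse sym1 symV symM.
Proof. by move=> s; apply: symP => x; exact: sym_funK. Qed.
Lemma symMV : right_inverse sym1 symV symM.
Proof. by move=> s; apply: symP => x; exact: sym_invK. Qed.

HB.instance Definition _ := isGroup.Build sym symMA sym1M symM1 symVM symMV.

Lemma symMx (s t : sym) x : (s * t) x = s (t x). Proof. exact: erefl. Qed.

(* Pointwise convergence, with X discrete. *)
Definition sym_agree (s : sym) (F : seq X) : set sym :=
  [set t | forall x, List.In x F -> t x = s x].

Definition sym_nbhs (s : sym) : set_system sym :=
  [set A | exists F, sym_agree s F `<=` A].

HB.instance Definition _ := hasNbhs.Build sym sym_nbhs.

Lemma sym_nbhs_filter s : ProperFilter (sym_nbhs s).
Proof.
apply: Build_ProperFilter_ex; first by move=> A [F FA]; exists s; apply: FA.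
split; first by exists [::].
  move=> A B [F FA] [F' F'B]; exists (F ++ F') => t tFF'.
  by split; [apply: FA|apply: F'B] => x Fx; apply: tFF'; apply: List.in_or_app;
    [left|right].
by move=> A B AB [F FA]; exists F; apply: subset_trans AB.
Qed.

Lemma sym_nbhs_singleton s A : sym_nbhs s A -> A s.
Proof. by case=> F; apply. Qed.

Lemma sym_nbhs_nbhs s A : sym_nbhs s A -> sym_nbhs s (sym_nbhs^~ A).
Proof.
case=> F FA; exists F => t tF; exists F => u uF.
by apply: FA => x Fx; rewrite uF ?tF.
Qed.

HB.instance Definition _ := Nbhs_isNbhsTopological.Build sym
  sym_nbhs_filter sym_nbhs_singleton sym_nbhs_nbhs.

Lemma sym_mulg_continuous : continuous (fun p : sym * sym => p.1 * p.2).
Proof.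
move=> [s t] A /= [F FA].
exists (sym_agree s (map t F), sym_agree t F).
  by split; [exists (map t F)|exists F].
case=> s' t' [/= s'F t'F]; apply: FA => x Fx.
by rewrite symMx t'F // s'F //; exact: List.in_map.
Qed.

Lemma sym_invg_continuous : continuous (fun s : sym => s^-1).
Proof.
move=> s A /= [F FA]; exists (map (sym_inv s) F) => t tF; apply: FA => x Fx /=.
apply: (can_inj (sym_funK t)).
by rewrite sym_invK tF ?sym_invK //; exact: List.in_map.
Qed.

HB.instance Definition _ :=
  isTopologicalGroup.Build sym sym_mulg_continuous sym_invg_continuous.

Lemma sym_hausdorff : hausdorff_space sym.
Proof.
move=> s t st; apply: symP => x.
have [u [/= sux tux]] := st _ _ (ex_intro _ [:: x] (@subset_refl _ _))
  (ex_intro _ [:: x] (@subset_refl _ _)).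
by rewrite -(sux x) ?(tux x) //; left.
Qed.

End SymmetricGroup.

Section PermutationRepresentation.
Variables (G : topGroupType) (Y : Type) (act : G -> Y -> Y).
Hypothesis act1 : forall y, act 1 y = y.
Hypothesis actM : forall x z y, act (x * z) y = act x (act z y).
Hypothesis act_locally_constant :
  forall y x0, \forall x \near x0, act x y = act x0 y.

Let actb x (p : Y * bool) := (act x p.1, p.2).

Let actbK x : cancel (actb x) (actb x^-1).
Proof. by case=> y b; rewrite /actb /= -actM mulVg act1. Qed.

Let actbVK x : cancel (actb x^-1) (actb x).
Proof. by case=> y b; rewrite /actb /= -actM mulgV act1. Qed.

Definition sym_rep x : sym (Y * bool) := Sym (actbK x) (actbVK x).

Lemma sym_rep_hom : group_hom sym_rep.
Proof.
by move=> x z; apply: symP => -[y b]; rewrite symMx /= /actb /= actM.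
Qed.

Lemma sym_rep_continuous : continuous sym_rep.
Proof.
move=> x0 A [F FA]; apply: filterS FA _.
apply: filter_forall_In => -[y b].
by apply: filterS (act_locally_constant y x0) => x xy; rewrite /= /actb /= xy.
Qed.

Variable q : Y -> bool.

Let flip (p : Y * bool) := (p.1, p.2 (+) q p.1).

Let flipK : involutive flip.
Proof. by case=> y b; rewrite /flip /= addbK. Qed.

Definition sym_flip : sym (Y * bool) := Sym flipK flipK.

Lemma sym_rep_conj_flip x :
  sym_rep x ^ sym_flip = sym_rep x <-> forall y, q (act x y) = q y.
Proof.
split=> [conj_id y|qx]; last first.
  by apply: symP => -[y b]; rewrite /conjg !symMx /= /flip /actb /= qx addbK.
move: conj_id => /(congr1 (fun s : sym _ => (s (y, false)).2)).
by rewrite /conjg !symMx /= /flip /actb /=; case: (q y); case: (q (act x y)).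
Qed.

Lemma epi_act_invariant (M : topGroupType) (f : M -> G) :
  TGr_epi M G f -> (forall m y, q (act (f m) y) = q y) ->
  forall x y, q (act x y) = q y.
Proof.
move=> epi qf x; apply/sym_rep_conj_flip.
have conj_flip_eq : (fun z => sym_rep z ^ sym_flip) = sym_rep.
  apply: epi => [||||| m]; first exact: sym_hausdorff.
  - exact: continuous_conjg sym_rep_continuous.
  - exact: group_hom_conjg sym_rep_hom.
  - exact: sym_rep_continuous.
  - exact: sym_rep_hom.
  - exact/sym_rep_conj_flip/qf.
exact: (congr1 (@^~ x) conj_flip_eq).
Qed.

End PermutationRepresentation.

Section LeftCosetAction.
Variables (G : topGroupType) (V : set G).
Hypotheses (Vopen : open V) (Vsub : is_subgroup V).

Lemma lcoset_act_subproof x (A : coset_space V) :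
  exists b, [set x * z | z in sval A] = lcoset V b.
Proof. by case: A => _ /= [a ->]; exists (x * a); exact: image_lcoset. Qed.

Definition lcoset_act x (A : coset_space V) : coset_space V :=
  exist _ [set x * z | z in sval A] (lcoset_act_subproof x A).

Lemma lcoset_act1 A : lcoset_act 1 A = A.
Proof.
apply: coset_space_eq; rewrite /= (_ : (fun z => 1 * z) = id) ?image_id //.
by apply: funext => z; rewrite mul1g.
Qed.

Lemma lcoset_actM x z A : lcoset_act (x * z) A = lcoset_act x (lcoset_act z A).
Proof.
apply: coset_space_eq; rewrite /= image_comp.
by congr image; apply: funext => w; rewrite /= mulgA.
Qed.

Lemma lcoset_act_locally_constant A x0 :
  \forall x \near x0, lcoset_act x A = lcoset_act x0 A.
Proof.
case: A => A [a Aa]; pose b := x0 * a.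
have : \forall x \near x0, V (b^-1 * (x * a)).
  apply: (continuousMg (@cst_continuous _ _ b^-1)
    (continuousMg (fun=> cvg_id) (@cst_continuous _ _ a))).
  by rewrite mulVg; apply: open_nbhs_nbhs; split=> //; case: Vsub.
apply: filterS => x Vx; apply: coset_space_eq => /=.
by rewrite Aa !image_lcoset; exact: eq_lcoset.
Qed.

Lemma epi_setmulg_open_subgroup (M : topGroupType) (f : M -> G) S :
  TGr_epi M G f -> is_subgroup S -> range f `<=` S -> setmulg V S = setT.
Proof.
move=> epi Ssub fS; apply/seteqP; split=> // a _.
pose meetsS (A : coset_space V) := `[< sval A `&` S !=set0 >].
have meetsS_act x A : S x -> meetsS (lcoset_act x A) = meetsS A.
  by move=> Sx; apply/asbool_equiv_eq/meets_subgroup_image_mulg.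
have := epi_act_invariant lcoset_act1 lcoset_actM lcoset_act_locally_constant
  epi (fun m A => meetsS_act _ A (fS _ (imageT f m))) a^-1 (lcoset_pt V 1).
have [[V1 _] [S1 _]] := (Vsub, Ssub).
have -> : meetsS (lcoset_pt V 1).
  by apply/asboolP; exists 1; split=> //; exists 1; rewrite ?mulg1.
rewrite /meetsS /= image_lcoset mulg1 => /asboolP[_ [[v Vv <-] Sav]].
case: Ssub => _ [_ SV]; exists v => //; exists (a^-1 * v)^-1; first exact: SV.
by rewrite invgM invgK mulgA mulgV mul1g.
Qed.

End LeftCosetAction.

Theorem theorem7p8 (M G : topGroupType) (f : M -> G) :
  hausdorff_space M -> hausdorff_space G ->
  continuous f -> group_hom f -> TGr_epi M G f ->
  let H := closure (range f) in
  right_unif_nonarchimedean H \/ nonarchimedean_group (G:=G) \/ open H ->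
  dense (range f).
Proof.
move=> _ _ _ fM epi H cond; apply: closureT_dense; rewrite -/H.
have Hsub : is_subgroup H := closure_subgroup (range_subgroup fM).
apply/seteqP; split=> // a _; apply: contrapT => Ha.
have [U U1 UHa] := closed_nbhs1_setmulg_notin (@closed_closure _ _) Ha.
have [V [Vo Vsub VU]] :
    exists V, [/\ open V, is_subgroup V & setmulg V H `<=` setmulg U H].
  case: cond => [Hna|[Gna|Ho]].
  - exact: right_unif_nonarchimedean_setmulg_open_subgroup.
  - exact: nonarchimedean_setmulg_open_subgroup.
  - exact: open_subgroup_setmulg.
apply/UHa/VU; rewrite (epi_setmulg_open_subgroup Vo Vsub epi Hsub) //.
exact: subset_closure.
Qed.
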